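(* Let $\mathfrak g$ be of type $A_n$, and for $i\in I$, $b\in\mathcal B(\infty)$ set $\mathrm{jump}_i(b)=\varepsilon_i(b)+\varepsilon_i^\ast(b)+\langle h_i,\mathrm{wt}(b)\rangle$. Then for all $i\in I$ and $b\in\mathcal B(\infty)$: (1) $\mathrm{jump}_i(b)=(\varepsilon_i(b)-\Sigma_1(b))+(\varepsilon_i^\ast(b)-\Sigma_1^\ast(b))$; in particular $\mathrm{jump}_i(b)\ge0$. (2) If $\mathrm{jump}_i(b)=0$, then $\widetilde f_i(b)=\widetilde f_i^\ast(b)$.
   Context: $I=\{1,\dots,n\}$, $\langle h_i,\alpha_j\rangle=2$ if $i=j$, $-1$ if $|i-j|=1$, $0$ otherwise. $\mathcal I=\{(s,t)\in\mathbb Z_{>0}\times I:s+t\le n+1\}$; $\mathcal B(\infty)$ is the set of $b=(b_{s,t})_{(s,t)\in\mathcal I}\in\mathbb Z_{\ge0}^{\mathcal I}$ with $b_{1,k}\ge b_{2,k-1}\ge\dots\ge b_{k,1}$ for $1\le k\le n$. Convention: $b_{s,t}=0$, $\mathbf e_{s,t}=0$ for $(s,t)\notin\mathcal I$. $\mathrm{wt}(b)=-\sum b_{s,t}\alpha_t$. $\partial_{s,t}(b)=b_{s,t}-b_{s,t+1}-b_{s+1,t-1}+b_{s+1,t}$, $\partial^\ast_{s,t}(b)=b_{s-1,t}-b_{s-1,t+1}-b_{s,t-1}+b_{s,t}$. For $1\le k\le n+1-i$: $\Sigma_k(b)=\sum_{s=k}^{n+1-i}\partial_{s,i}(b)$,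 $\varepsilon_i(b)=\max_k\Sigma_k(b)$, $m_i(b)$ the smallest maximizing $k$, $\widetilde f_i(b)=b+\mathbf e_{m_i(b),i}$. For $1\le k\le i$: $\Sigma^\ast_k(b)=\sum_{t=1}^k\partial^\ast_{t,i+1-t}(b)$, $\varepsilon_i^\ast(b)=\max_k\Sigma^\ast_k(b)$, $m_i^\ast(b)$ the smallest maximizing $k$, $\widetilde f_i^\ast(b)=b+\sum_{t=1}^{m_i^\ast(b)}(\mathbf e_{t,i+1-t}-\mathbf e_{t-1,i+1-t})$. *)

From mathcomp Require Import all_boot all_order all_algebra.
Set Implicit Arguments. Unset Strict Implicit. Unset Printing Implicit Defensive.
Import Order.TTheory GRing.Theory Num.Theory.
Local Open Scope ring_scope.

Definition inI (n s t : nat) : bool :=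
  [&& (0 < s)%N, (0 < t)%N, (t <= n)%N & (s + t <= n.+1)%N].

(* An element b is represented as a function nat -> nat -> int;
   coordinates outside \mathcal I are read as 0 (the paper's convention). *)
Definition bv (n : nat) (b : nat -> nat -> int) (s t : nat) : int :=
  if inI n s t then b s t else 0.

Definition inBinf (n : nat) (b : nat -> nat -> int) : Prop :=
  (forall s t, ~~ inI n s t -> b s t = 0) /\
  (forall s t, inI n s t -> 0 <= b s t) /\
  (forall k s, (1 <= k <= n)%N -> (1 <= s)%N -> (s < k)%N ->
     b s.+1 (k - s)%N <= b s (k.+1 - s)%N).

Definition cartanA (i j : nat) : int :=
  if i == j then 2 else if (i == j.+1) || (j == i.+1) then -1 else 0.

(* <h_i, wt(b)>,  wt(b) = - sum_{(s,t) in I} b_{s,t} alpha_t *)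
Definition pair_wt (n i : nat) (b : nat -> nat -> int) : int :=
  - \sum_(1 <= s < n.+1) \sum_(1 <= t < n.+1)
      (if inI n s t then bv n b s t * cartanA i t else 0).

Definition ev (n s t : nat) : nat -> nat -> int :=
  fun s' t' => if inI n s t && (s' == s) && (t' == t) then 1 else 0.

Definition partial (n : nat) (b : nat -> nat -> int) (s t : nat) : int :=
  bv n b s t - bv n b s t.+1 - bv n b s.+1 t.-1 + bv n b s.+1 t.

Definition partial_star (n : nat) (b : nat -> nat -> int) (s t : nat) : int :=
  bv n b s.-1 t - bv n b s.-1 t.+1 - bv n b s t.-1 + bv n b s t.

Definition Sigma (n i : nat) (b : nat -> nat -> int) (k : nat) : int :=
  \sum_(k <= s < (n.+1 - i).+1) partial n b s i.

Definition Sigma_star (n i : nat) (b : nat -> nat -> int) (k : nat) : int :=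
  \sum_(1 <= t < k.+1) partial_star n b t (i.+1 - t).

Definition max_range (L : nat) (f : nat -> int) : int :=
  foldr Num.max (f 1%N) [seq f k | k <- iota 1 L].

Definition argmax_range (L : nat) (f : nat -> int) : nat :=
  (find (fun k => f k == max_range L f) (iota 1 L)).+1.

Definition eps (n i : nat) b := max_range (n.+1 - i) (Sigma n i b).
Definition m_i (n i : nat) b := argmax_range (n.+1 - i) (Sigma n i b).
Definition eps_star (n i : nat) b := max_range i (Sigma_star n i b).
Definition m_star (n i : nat) b := argmax_range i (Sigma_star n i b).

Definition f_tilde (n i : nat) (b : nat -> nat -> int) : nat -> nat -> int :=
  fun s t => b s t + ev n (m_i n i b) i s t.

Definition f_tilde_star (n i : nat) (b : nat -> nat -> int) : nat -> nat -> int :=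
  fun s t => b s t + \sum_(1 <= u < (m_star n i b).+1)
                       (ev n u (i.+1 - u) s t - ev n u.-1 (i.+1 - u) s t).

Definition jump (n i : nat) (b : nat -> nat -> int) : int :=
  eps n i b + eps_star n i b + pair_wt n i b.

(* Write D_t for the t-th column sum of b.  By the Cartan matrix, <h_i, wt b>
   is -(2 D_i - D_(i-1) - D_(i+1)), while Sigma_1(b) telescopes column by
   column to 2 D_i - D_(i-1) - D_(i+1) - (b_(1,i) - b_(1,i-1)), and the last
   bracket is Sigma*_1(b).  Hence jump_i(b) is the sum of the two excesses
   eps_i - Sigma_1 and eps*_i - Sigma*_1, each nonnegative because k = 1 is in
   the range of both maxima.  If the jump vanishes, both maxima are attained
   at k = 1, so tilde f_i and tilde f*_i both add e_(1,i) (e_(0,i) being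
   zero). *)

From mathcomp Require Import all_boot all_order all_algebra.
From mathcomp Require Import zify.
Import Order.TTheory GRing.Theory Num.Theory.
Local Open Scope ring_scope.

Lemma max_range_ge_at1 L (f : nat -> int) : f 1%N <= max_range L f.
Proof. by rewrite /max_range; elim: [seq _ | _ <- _] => //= a s IH; rewrite le_max IH orbT. Qed.

Lemma argmax_range_eq1 L (f : nat -> int) :
  f 1%N = max_range L f -> argmax_range L f = 1%N.
Proof. by case: L => [|L] // eq1; rewrite /argmax_range /= -eq1 eqxx. Qed.

Lemma big_nat_supp {V : nmodType} (g : nat -> V) a c lo hi :
  (a <= lo)%N -> (hi <= c)%N -> (forall s, ~~ (lo <= s < hi)%N -> g s = 0) ->
  \sum_(a <= s < c) g s = \sum_(lo <= s < hi) g s.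
Proof.
move=> a_lo hi_c g0; have [hi_lo | lo_hi] := leqP hi lo.
  by rewrite [RHS]big_geq // big1 // => s _; apply: g0; lia.
rewrite (@big_cat_nat _ _ _ lo) //=; last lia.
rewrite (@big_cat_nat _ _ _ hi lo c) //=; last exact: ltnW.
rewrite big1_seq ?add0r; last by move=> s; rewrite mem_index_iota => hs; apply: g0; lia.
by rewrite [X in _ + X]big1_seq ?addr0 // => s; rewrite mem_index_iota => hs; apply: g0; lia.
Qed.

Lemma big_nat_pick {V : nmodType} (g : nat -> V) a c x :
  (~~ (a <= x < c)%N -> g x = 0) ->
  \sum_(a <= t < c) (if t == x then g t else 0) = g x.
Proof. by move=> g0; rewrite -big_mkcond big_nat1_eq; case: ifP => // /negbT /g0. Qed.

Lemma big_nat_succ {V : zmodType} (g : nat -> V) m k : (m <= k)%N ->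
  \sum_(m <= s < k) g s.+1 = \sum_(m <= s < k.+1) g s - g m.
Proof. by move=> le_mk; rewrite big_nat_recl // addrC addKr. Qed.

Lemma mulr_cartanA (i t : nat) (x : int) : (1 <= i)%N ->
  x * cartanA i t = (if t == i then x *+ 2 else 0)
                    - (if t == i.-1 then x else 0) - (if t == i.+1 then x else 0).
Proof.
move=> i_gt0; rewrite /cartanA.
by case: (i =P t); case: (i =P t.+1); case: (t =P i.+1); case: (t =P i); case: (t =P i.-1)
  => /=; lia.
Qed.

Section ColumnSums.
Variables (n : nat) (b : nat -> nat -> int).

Definition column_sum t := \sum_(1 <= s < n.+1) bv n b s t.

Lemma bv_supp_row s t : ~~ (1 <= t < n.+1)%N -> bv n b s t = 0.
Proof. by rewrite /bv /inI; case: ifP => //; lia. Qed.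

Lemma bv_supp_col s t : ~~ (1 <= s < n.+1 - t.-1)%N -> bv n b s t = 0.
Proof. by rewrite /bv /inI; case: ifP => //; lia. Qed.

Lemma column_sumE t a c : (a <= 1)%N -> (n.+1 - t.-1 <= c)%N ->
  \sum_(a <= s < c) bv n b s t = column_sum t.
Proof.
move=> a_le1 c_ge; rewrite /column_sum.
have supp := bv_supp_col^~ t.
rewrite (big_nat_supp _ _ _ _ _ a_le1 c_ge supp).
by rewrite [RHS](big_nat_supp _ _ _ _ _ (leqnn 1) _ supp) ?leq_subr.
Qed.

Lemma pair_wt_row s i : (1 <= i <= n)%N ->
  \sum_(1 <= t < n.+1) (if inI n s t then bv n b s t * cartanA i t else 0)
  = bv n b s i *+ 2 - bv n b s i.-1 - bv n b s i.+1.
Proof.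
case/andP=> i_gt0 _.
rewrite (eq_bigr (fun t => bv n b s t * cartanA i t)); last first.
  by move=> t _; rewrite /bv; case: (inI n s t); rewrite ?mul0r.
under eq_bigr do rewrite mulr_cartanA //.
by rewrite !sumrB !big_nat_pick // => /bv_supp_row ->.
Qed.

Lemma pair_wt_columns i : (1 <= i <= n)%N ->
  pair_wt n i b = - (column_sum i *+ 2 - column_sum i.-1 - column_sum i.+1).
Proof.
move=> i_range; rewrite /pair_wt.
rewrite (eq_big_nat _ _ (fun s _ => pair_wt_row s _ i_range)).
by rewrite !sumrB sumrMnl.
Qed.

Lemma Sigma1_columns i : (1 <= i <= n)%N ->
  Sigma n i b 1 = column_sum i *+ 2 - column_sum i.-1 - column_sum i.+1
                  - (bv n b 1 i - bv n b 1 i.-1).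
Proof.
move=> i_range; rewrite /Sigma /partial big_split /= !sumrB.
rewrite (big_nat_succ (fun s => bv n b s i.-1)) ?(big_nat_succ (fun s => bv n b s i)) //.
by rewrite !column_sumE ?mulr2n //; lia.
Qed.

Lemma Sigma_star1E i : (1 <= i)%N ->
  Sigma_star n i b 1 = bv n b 1 i - bv n b 1 i.-1.
Proof.
move=> i_gt0; rewrite /Sigma_star big_nat1 /partial_star subSS subn0.
by rewrite /bv /inI /=; lia.
Qed.

Lemma pair_wt_Sigma1 i : (1 <= i <= n)%N ->
  pair_wt n i b = - (Sigma n i b 1 + Sigma_star n i b 1).
Proof.
move=> i_range; have /andP[i_gt0 _] := i_range.
by rewrite pair_wt_columns // Sigma1_columns // Sigma_star1E // subrK.
Qed.

End ColumnSums.

Theorem proposition6p7 (n i : nat) (b : nat -> nat -> int) :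
  (1 <= i <= n)%N -> inBinf n b ->
  [/\ jump n i b = (eps n i b - Sigma n i b 1) + (eps_star n i b - Sigma_star n i b 1),
      0 <= jump n i b
    & jump n i b = 0 -> forall s t, f_tilde n i b s t = f_tilde_star n i b s t].
Proof.
move=> i_range _.
have jumpE : jump n i b = (eps n i b - Sigma n i b 1) + (eps_star n i b - Sigma_star n i b 1).
  by rewrite /jump pair_wt_Sigma1 //; lia.
have eps_ge : Sigma n i b 1 <= eps n i b by apply: max_range_ge_at1.
have eps_star_ge : Sigma_star n i b 1 <= eps_star n i b by apply: max_range_ge_at1.
split => //; first by rewrite jumpE; lia.
move=> jump0 s t.
have m1 : m_i n i b = 1%N by apply: argmax_range_eq1; rewrite -/(eps n i b); lia.
have m_star1 : m_star n i b = 1%N by apply: argmax_range_eq1; rewrite -/(eps_star n i b); lia.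
by rewrite /f_tilde /f_tilde_star m1 m_star1 big_nat1 subSS subn0 /ev /inI /= subr0.
Qed.
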